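(* Let $A$ be a finite multiset of $n$ points in $\mathbb{R}^d$ with mean $\mu$, $\varepsilon>0$ and $\gamma>0$. Let $P\subset\mathbb{R}^d$ be a finite multiset of points (means) such that at least $\frac{7}{10}|P|$ of them are $\gamma$-good. Then the point returned by $\textsc{ComputeWinner}(P)$ is $5\gamma$-good.
   Context: $\mu=\frac1n\sum_{p\in A}p$, $\mathrm{Opt}=\sum_{p\in A}\|p-\mu\|^2$. A point $x$ is $\gamma$-good if $\|x-\mu\|\le\gamma\sqrt{\frac{\varepsilon\,\mathrm{Opt}}{n}}$. $\textsc{ComputeWinner}(P)$: for each $p_j\in P$ let $\rho_j$ be the distance from $p_j$ to its $\lceil\frac{7}{10}|P|\rceil$-th closest point of $P$, and $D_j=\sum_{p\in P,\ \|p-p_j\|\le\rho_j}\|p-p_j\|$; output a $p_j$ minimizing $D_j$. *)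

From mathcomp Require Import all_boot all_order all_algebra.
Set Implicit Arguments. Unset Strict Implicit. Unset Printing Implicit Defensive.
Import Order.TTheory GRing.Theory Num.Theory.
Local Open Scope ring_scope.

Section Defs.
Variables (R : rcfType) (d : nat).

Definition enorm (x : 'rV[R]_d) : R := Num.sqrt (\sum_(i < d) x ord0 i ^+ 2).
Definition edist (x y : 'rV[R]_d) : R := enorm (x - y).

(* Multisets of points are indexed families *)
Definition mean (n : nat) (A : 'I_n -> 'rV[R]_d) : 'rV[R]_d :=
  n%:R^-1 *: \sum_(i < n) A i.

Definition Opt (n : nat) (A : 'I_n -> 'rV[R]_d) : R :=
  \sum_(i < n) enorm (A i - mean A) ^+ 2.

Definition good (n : nat) (A : 'I_n -> 'rV[R]_d) (eps gamma : R) (x : 'rV[R]_d) : bool :=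
  enorm (x - mean A) <= gamma * Num.sqrt (eps * Opt A / n%:R).

(* ceil(7 m / 10) *)
Definition kwin (m : nat) : nat := ((7 * m + 9) %/ 10)%N.

(* rho_j: distance from P j to its ceil(7|P|/10)-th closest point of P
   (counted with multiplicity, P j itself included, 1-indexed) *)
Definition rho (m : nat) (P : 'I_m -> 'rV[R]_d) (j : 'I_m) : R :=
  nth 0 (sort <=%R [seq edist (P i) (P j) | i <- enum 'I_m]) (kwin m).-1.

Definition Dval (m : nat) (P : 'I_m -> 'rV[R]_d) (j : 'I_m) : R :=
  \sum_(i < m | edist (P i) (P j) <= rho P j) edist (P i) (P j).

(* ComputeWinner may return any minimizer of D *)
Definition is_winner (m : nat) (P : 'I_m -> 'rV[R]_d) (j : 'I_m) : Prop :=
  forall i : 'I_m, Dval P j <= Dval P i.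

End Defs.

(* Let r be the goodness radius and W the set of good points, so that |W| >= 7|P|/10.
   For g in W, at least 7|P|/10 points of P lie within 2r of p_g, hence rho_g <= 2r
   and D_g <= 2r|S|, where S is the rho_g-ball around p_g; every point of S is within
   3r of mu.  If the winner p_j were farther than 5r from mu, every point of S would be
   farther than 2r from p_j and every point of W farther than 4r.  The rho_j-ball T
   around p_j also holds at least 7|P|/10 points, so it meets W u S, and
   |T n (W u S)| + |T n W| >= |W u S|.  Hence D_j > 2r|W u S| >= D_g, contradicting
   the minimality of D_j. *)

From mathcomp Require Import all_boot all_order all_algebra ring lra zify.
Set Implicit Arguments. Unset Strict Implicit. Unset Printing Implicit Defensive.
Import Order.TTheory GRing.Theory Num.Theory.
Local Open Scope ring_scope.

Lemma cauchy_schwarz (R : realDomainType) (I : finType) (x y : I -> R) :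
  (\sum_i x i * y i) ^+ 2 <= (\sum_i x i ^+ 2) * (\sum_i y i ^+ 2).
Proof.
set X := \sum_i x i ^+ 2; set Y := \sum_i y i ^+ 2; set B := \sum_i x i * y i.
have inner i : \sum_j (x i * y j - x j * y i) ^+ 2
               = x i ^+ 2 * Y + X * y i ^+ 2 - 2 * (x i * y i) * B.
  rewrite !mulr_sumr mulr_suml -big_split -sumrB /=.
  by apply: eq_bigr => j _; ring.
have lagrange : \sum_i \sum_j (x i * y j - x j * y i) ^+ 2 = 2 * (X * Y - B ^+ 2).
  rewrite (eq_bigr _ (fun i _ => inner i)) sumrB big_split /=.
  by rewrite -!mulr_suml -!mulr_sumr -/X -/Y -/B; ring.
have : 0 <= \sum_i \sum_j (x i * y j - x j * y i) ^+ 2.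
  by apply: sumr_ge0 => i _; apply: sumr_ge0 => j _; apply: sqr_ge0.
by rewrite lagrange pmulr_rge0 // subr_ge0.
Qed.

Section EuclideanNorm.
Variables (R : rcfType) (d : nat).
Implicit Types x y z : 'rV[R]_d.

Lemma enormN x : enorm (- x) = enorm x.
Proof. by congr Num.sqrt; apply: eq_bigr => i _; rewrite mxE sqrrN. Qed.

Lemma enormD x y : enorm (x + y) <= enorm x + enorm y.
Proof.
set X := \sum_i x ord0 i ^+ 2; set Y := \sum_i y ord0 i ^+ 2.
have X_ge0 : 0 <= X by apply: sumr_ge0 => i _; apply: sqr_ge0.
have Y_ge0 : 0 <= Y by apply: sumr_ge0 => i _; apply: sqr_ge0.
have expand : \sum_i (x + y) ord0 i ^+ 2 = X + Y + 2 * \sum_i x ord0 i * y ord0 i.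
  rewrite -!big_split mulr_sumr -big_split /=.
  by apply: eq_bigr => i _; rewrite mxE; ring.
have cross : \sum_i x ord0 i * y ord0 i <= Num.sqrt X * Num.sqrt Y.
  rewrite -sqrtrM // (le_trans (ler_norm _)) // -sqrtr_sqr ler_sqrt ?mulr_ge0 //.
  exact: cauchy_schwarz.
rewrite /enorm expand -[_ + _ in X in _ <= X]ger0_norm ?addr_ge0 ?sqrtr_ge0 //.
rewrite -sqrtr_sqr ler_sqrt ?sqr_ge0 // sqrrD !sqr_sqrtr // -/X -/Y; lra.
Qed.

Lemma edist_ge0 x y : 0 <= edist x y.
Proof. exact: sqrtr_ge0. Qed.

Lemma edistC x y : edist x y = edist y x.
Proof. by rewrite /edist -enormN opprB. Qed.

Lemma ler_edistD x y z : edist x z <= edist x y + edist y z.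
Proof. by have := enormD (x - y) (y - z); rewrite addrA subrK. Qed.

End EuclideanNorm.

Lemma nth_sort_le disp (T : orderType disp) (x0 c : T) (s : seq T) (k : nat) :
  (k < size s)%N -> (nth x0 (sort <=%O s) k <= c)%O = (k < count (<= c)%O s)%N.
Proof.
move=> ks; set t := sort <=%O s.
have t_sorted : sorted <=%O t := sort_sorted le_total s.
have kt : (k < size t)%N by rewrite size_sort.
rewrite -(count_sort <=%O) -/t; apply/idP/idP => [tk_le | k_lt].
- have all_le : all (<= c)%O (take k.+1 t).
    apply/(all_nthP x0) => i; rewrite size_takel // => ik.
    rewrite nth_take //; apply: le_trans tk_le.
    by apply: (sorted_leq_nth le_trans lexx) => //; rewrite inE // (leq_trans ik).
  apply: leq_trans (leq_count_subseq _ (take_subseq t k.+1)).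
  by move: all_le; rewrite all_count size_takel // => /eqP->.
- have : nth x0 t k \in [seq y <- t | (y <= c)%O].
    rewrite (sorted_filter_le c t_sorted) -(nth_take x0 k_lt).
    by rewrite mem_nth // size_takel // count_size.
  by rewrite mem_filter => /andP[].
Qed.

Lemma count_enum (T : finType) (p : pred T) : count p (enum T) = #|p|.
Proof.
rewrite cardE /enum_mem size_filter /= count_filter.
by apply: eq_count => x /=; rewrite andbT.
Qed.

Lemma card_overlap (T : finType) (X W S : {set T}) :
  (0 < #|T|)%N -> (7 * #|T| <= 10 * #|X|)%N -> (7 * #|T| <= 10 * #|W|)%N ->
  (0 < #|X :&: (W :|: S)|)%N && (#|W :|: S| <= #|X :&: (W :|: S)| + #|X :&: W|)%N.
Proof.
have := cardsUI X (W :|: S); have := cardsUI X W.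
have := max_card (X :|: (W :|: S)); have := max_card (X :|: W).
have := subset_leq_card (subsetUl W S); lia.
Qed.

Lemma kwin_bounds m : (0 < m)%N -> (0 < kwin m <= m)%N && (7 * m <= 10 * kwin m)%N.
Proof. rewrite /kwin; lia. Qed.

Section Winner.
Variables (R : rcfType) (d m : nat) (P : 'I_m -> 'rV[R]_d).
Hypothesis m_gt0 : (0 < m)%N.

Definition ball (j : 'I_m) (c : R) : {set 'I_m} := [set i | edist (P i) (P j) <= c].

Lemma rho_le j c : (rho P j <= c) = (kwin m <= #|ball j c|)%N.
Proof.
have /andP[/andP[k_gt0 k_le] _] := kwin_bounds m_gt0.
rewrite /rho nth_sort_le; last by rewrite size_map size_enum_ord prednK.
by rewrite prednK // count_map count_enum /ball cardsE.
Qed.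

Lemma kwin_le_card_ball_rho j : (kwin m <= #|ball j (rho P j)|)%N.
Proof. by rewrite -rho_le. Qed.

Lemma Dval_ball j : Dval P j = \sum_(i in ball j (rho P j)) edist (P i) (P j).
Proof. by apply: eq_bigl => i; rewrite inE. Qed.

Variables (mu : 'rV[R]_d) (r : R).
Let W := [set i | edist (P i) mu <= r].
Hypothesis W_large : (7 * m <= 10 * #|W|)%N.

Lemma rho_near_le g : g \in W -> rho P g <= 2 * r.
Proof.
rewrite inE => g_near.
rewrite rho_le; apply: leq_trans (_ : kwin m <= #|W|)%N _; first by rewrite /kwin; lia.
apply/subset_leq_card/subsetP => i; rewrite !inE => i_near.
by apply: le_trans (ler_edistD _ mu _) _; rewrite (edistC mu); lra.
Qed.

Lemma Dval_near_le g : g \in W -> Dval P g <= 2 * r * #|ball g (rho P g)|%:R.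
Proof.
move=> gW; rewrite Dval_ball mulr_natr -sumr_const.
by apply: ler_sum => i; rewrite inE => /le_trans; apply; apply: rho_near_le.
Qed.

Lemma ball_rho_near g : g \in W -> {in ball g (rho P g), forall i, edist (P i) mu <= 3 * r}.
Proof.
move=> gW i; rewrite inE => i_close.
have := rho_near_le gW; move: gW; rewrite inE => g_near.
by have := ler_edistD (P i) (P g) mu; lra.
Qed.

Lemma Dval_ge (S : {set 'I_m}) j :
  {in S, forall i, edist (P i) mu <= 3 * r} ->
  (edist (P j) mu - 3 * r) * #|ball j (rho P j) :&: (W :|: S)|%:R
  + 2 * r * #|ball j (rho P j) :&: W|%:R <= Dval P j.
Proof.
move=> S_near; set T := ball j (rho P j).
have sum_indicator (V : {set 'I_m}) (c : R) :
    \sum_(i in T) (if i \in V then c else 0) = c * #|T :&: V|%:R.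
  by rewrite -big_mkcondr mulr_natr -sumr_const; apply: eq_bigl => i; rewrite in_setI.
rewrite Dval_ball -!sum_indicator -big_split /=; apply: ler_sum => i _.
have far : edist (P j) mu - edist (P i) mu <= edist (P i) (P j).
  by have := ler_edistD (P j) (P i) mu; rewrite (edistC (P j) (P i)); lra.
have := edist_ge0 (P i) (P j); rewrite in_setU.
case: (boolP (i \in W)) => [iW | _] /=; first by move: iW; rewrite inE; lra.
case: (boolP (i \in S)) => [iS | _] /=; last by lra.
by have := S_near i iS; lra.
Qed.

Lemma winner_near j : is_winner P j -> edist (P j) mu <= 5 * r.
Proof.
move=> j_win; rewrite leNgt; apply/negP => j_far.
have [g gW] : exists g, g \in W by apply/set0Pn; rewrite -card_gt0; lia.
have r_ge0 : 0 <= r by move: gW; rewrite inE; apply: le_trans (edist_ge0 _ _).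
set S := ball g (rho P g); set T := ball j (rho P j).
have T_large : (7 * m <= 10 * #|T|)%N.
  have /andP[_ k_large] := kwin_bounds m_gt0.
  by have := kwin_le_card_ball_rho j; rewrite -/T; lia.
have := @card_overlap _ T W S; rewrite card_ord => /(_ m_gt0 T_large W_large) /andP[].
rewrite -!(ler_nat R) natrD.
set a := #|T :&: _|%:R; set b := #|T :&: W|%:R => a_ge1 U_le.
have S_le : #|S|%:R <= a + b :> R.
  by apply: le_trans U_le; rewrite ler_nat subset_leq_card // subsetUr.
have := Dval_ge j (ball_rho_near gW); have := Dval_near_le gW; have := j_win g.
have : 2 * r * #|S|%:R <= 2 * r * (a + b) by rewrite ler_wpM2l ?mulr_ge0.
have : 0 < (edist (P j) mu - 5 * r) * a by rewrite mulr_gt0 ?subr_gt0 // (lt_le_trans ltr01).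
rewrite -/S -/T -/a -/b; lra.
Qed.

End Winner.

Theorem lemma4p4 (R : rcfType) (d n m : nat) (A : 'I_n -> 'rV[R]_d)
  (P : 'I_m -> 'rV[R]_d) (eps gamma : R) :
  (0 < n)%N -> (0 < m)%N -> 0 < eps -> 0 < gamma ->
  (7 * m <= 10 * #|[set i : 'I_m | good A eps gamma (P i)]|)%N ->
  forall j : 'I_m, is_winner P j -> good A eps (5 * gamma) (P j).
Proof.
(* The argument works for any radius. *)
move=> _ m_gt0 _ _ good_large j j_win.
by rewrite /good -mulrA; apply: (winner_near m_gt0 good_large j_win).
Qed.
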